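(* Let $P(a,b)=\dfrac{a(1-b)}{a(1-b)+b(1-a)}$ (the James function) and let $0<c<1$. Then the level curve $\{(a,b)\in(0,1)^2 : P(a,b)=c\}$ is the graph of the unique solution $b=b(a)$, $0<a<1$, of the differential equation \[ \frac{db}{da}=\frac{b(1-b)}{a(1-a)} \] that passes through the point $(c,\tfrac12)$. *)

From Stdlib Require Import Reals.
Open Scope R_scope.

Definition james (a b : R) : R := a * (1 - b) / (a * (1 - b) + b * (1 - a)).

Definition solves_james_ode (f : R -> R) : Prop :=
  forall a, 0 < a < 1 -> derivable_pt_lim f a (f a * (1 - f a) / (a * (1 - a))).

(* The level curve is explicit: P(a,b) = c is linear in b, with solution
   b = (1-c)a / ((1-c)a + c(1-a)), and a direct computation shows that this
   function solves the equation.  For uniqueness, the first integral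
   D(a) = b ((1-c)a + c(1-a)) - (1-c)a of the equation vanishes exactly on
   the level curve, and along any solution it satisfies the linear equation
   D' = m D with m = (1-a-b)/(a(1-a)) continuous.  A Gronwall-type argument
   (monotonicity of D^2 exp(-2Ma) for a bound M on m over a compact interval)
   shows that such a D vanishing at a = c vanishes everywhere. *)
From Stdlib Require Import Reals Lra.
Open Scope R_scope.

Lemma derivable_pt_lim_affine (p q x : R) :
  derivable_pt_lim (fun y => p * y + q) x p.
Proof.
  pose proof (derivable_pt_lim_plus _ _ x _ _
    (derivable_pt_lim_scal id p x 1 (derivable_pt_lim_id x))
    (derivable_pt_lim_const q x)) as H.
  rewrite Rmult_1_r, Rplus_0_r in H. exact H.
Qed.

Lemma derivable_pt_lim_exp_scal (k x : R) :
  derivable_pt_lim (fun y => exp (k * y)) x (exp (k * x) * k).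
Proof.
  apply (derivable_pt_lim_comp (fun y => k * y) exp x k).
  - apply (derivable_pt_lim_ext (fun y => k * y + 0)).
    + intro y. ring.
    + apply derivable_pt_lim_affine.
  - apply derivable_pt_lim_exp.
Qed.

Section LinearODE.

Variables h m : R -> R.

Lemma derivable_pt_lim_sqr_exp (k x : R) :
  derivable_pt_lim h x (m x * h x) ->
  derivable_pt_lim (fun y => h y * h y * exp (k * y)) x
    (h x * h x * exp (k * x) * (2 * m x + k)).
Proof.
  intro Hh.
  pose proof (derivable_pt_lim_mult (h * h)%F (fun y => exp (k * y)) x _ _
    (derivable_pt_lim_mult h h x _ _ Hh Hh) (derivable_pt_lim_exp_scal k x)) as H.
  unfold mult_fct in H.
  replace (h x * h x * exp (k * x) * (2 * m x + k)) with
    ((m x * h x * h x + h x * (m x * h x)) * exp (k * x)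
     + h x * h x * (exp (k * x) * k)) by ring.
  exact H.
Qed.

Lemma sqr_exp_mvt (k p q : R) : p < q ->
  (forall x, p <= x <= q -> derivable_pt_lim h x (m x * h x)) ->
  exists xi, p < xi < q /\
    h q * h q * exp (k * q) - h p * h p * exp (k * p)
    = h xi * h xi * exp (k * xi) * (2 * m xi + k) * (q - p).
Proof.
  intros pq Hh.
  destruct (MVT_cor2 (fun y => h y * h y * exp (k * y))
    (fun y => h y * h y * exp (k * y) * (2 * m y + k)) p q pq
    (fun x Hx => derivable_pt_lim_sqr_exp k x (Hh x Hx))) as [xi [E Hxi]].
  exists xi. split; assumption.
Qed.

Lemma linear_ode_vanish_forward (M p q : R) : p < q ->
  (forall x, p <= x <= q -> derivable_pt_lim h x (m x * h x)) ->
  (forall x, p <= x <= q -> m x <= M) ->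
  h p = 0 -> h q = 0.
Proof.
  intros pq Hh Hm hp.
  destruct (sqr_exp_mvt (- (2 * M)) p q pq Hh) as [xi [Hxi E]].
  rewrite hp in E.
  pose proof (exp_pos (- (2 * M) * xi)). pose proof (exp_pos (- (2 * M) * q)).
  assert (m xi <= M) by (apply Hm; lra).
  assert (0 <= h xi * h xi * exp (- (2 * M) * xi)) by nra.
  assert (h xi * h xi * exp (- (2 * M) * xi) * (2 * m xi + - (2 * M)) <= 0)
    by nra.
  assert (h q * h q * exp (- (2 * M) * q) <= 0) by nra.
  assert (h q * h q <= 0) by nra.
  nra.
Qed.

Lemma linear_ode_vanish_backward (M p q : R) : p < q ->
  (forall x, p <= x <= q -> derivable_pt_lim h x (m x * h x)) ->
  (forall x, p <= x <= q -> M <= m x) ->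
  h q = 0 -> h p = 0.
Proof.
  intros pq Hh Hm hq.
  destruct (sqr_exp_mvt (- (2 * M)) p q pq Hh) as [xi [Hxi E]].
  rewrite hq in E.
  pose proof (exp_pos (- (2 * M) * xi)). pose proof (exp_pos (- (2 * M) * p)).
  assert (M <= m xi) by (apply Hm; lra).
  assert (0 <= h xi * h xi * exp (- (2 * M) * xi)) by nra.
  assert (0 <= h xi * h xi * exp (- (2 * M) * xi) * (2 * m xi + - (2 * M)))
    by nra.
  assert (h p * h p * exp (- (2 * M) * p) <= 0) by nra.
  assert (h p * h p <= 0) by nra.
  nra.
Qed.

Lemma linear_ode_vanish (l u c : R) :
  (forall x, l < x < u -> derivable_pt_lim h x (m x * h x)) ->
  (forall x, l < x < u -> continuity_pt m x) ->
  l < c < u -> h c = 0 -> forall a, l < a < u -> h a = 0.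
Proof.
  intros Hh Hm Hc hc a Ha.
  destruct (Rtotal_order c a) as [ca | [<- | ac]].
  - destruct (continuity_ab_maj m c a (Rlt_le _ _ ca)) as [x [Hx _]].
    { intros y Hy. apply Hm. lra. }
    apply (linear_ode_vanish_forward (m x) c a ca); [| exact Hx | exact hc].
    intros y Hy. apply Hh. lra.
  - exact hc.
  - destruct (continuity_ab_min m a c (Rlt_le _ _ ac)) as [x [Hx _]].
    { intros y Hy. apply Hm. lra. }
    apply (linear_ode_vanish_backward (m x) a c ac); [| exact Hx | exact hc].
    intros y Hy. apply Hh. lra.
Qed.

End LinearODE.

Lemma continuity_pt_james_coefficient (g : R -> R) (x : R) :
  continuity_pt g x -> 0 < x < 1 ->
  continuity_pt (fun y => (1 - y - g y) / (y * (1 - y))) x.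
Proof.
  intros Hg Hx.
  assert (Hid : continuity_pt id x)
    by apply derivable_continuous_pt, derivable_pt_id.
  assert (Hone : continuity_pt (fct_cte 1) x)
    by apply derivable_continuous_pt, derivable_pt_const.
  apply continuity_pt_div; [| | nra].
  - apply continuity_pt_minus; [apply continuity_pt_minus |]; assumption.
  - apply continuity_pt_mult; [| apply continuity_pt_minus]; assumption.
Qed.

Definition james_level_denom (c a : R) : R := (1 - c) * a + c * (1 - a).

Definition james_level (c a : R) : R := (1 - c) * a / james_level_denom c a.

Section JamesLevel.

Variable c : R.
Hypothesis hc : 0 < c < 1.

Lemma james_level_denom_pos (a : R) : 0 < a < 1 -> 0 < james_level_denom c a.
Proof. intro Ha. unfold james_level_denom. nra. Qed.

Lemma derivable_pt_lim_james_level_denom (x : R) :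
  derivable_pt_lim (james_level_denom c) x (1 - 2 * c).
Proof.
  apply (derivable_pt_lim_ext (fun y => (1 - 2 * c) * y + c)).
  - intro y. unfold james_level_denom. ring.
  - apply derivable_pt_lim_affine.
Qed.

Lemma james_level_solves : solves_james_ode (james_level c).
Proof.
  intros a Ha. pose proof (james_level_denom_pos a Ha) as Hden.
  assert (Hnum : derivable_pt_lim (fun y => (1 - c) * y) a (1 - c)).
  { apply (derivable_pt_lim_ext (fun y => (1 - c) * y + 0)).
    - intro y. ring.
    - apply derivable_pt_lim_affine. }
  pose proof (derivable_pt_lim_div _ _ a _ _ Hnum
    (derivable_pt_lim_james_level_denom a) ltac:(lra)) as H.
  apply (derivable_pt_lim_ext _ (james_level c)) in H; [| reflexivity].
  replace (james_level c a * (1 - james_level c a) / (a * (1 - a)))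
    with (((1 - c) * james_level_denom c a - (1 - 2 * c) * ((1 - c) * a))
          / Rsqr (james_level_denom c a)).
  - exact H.
  - unfold james_level, james_level_denom, Rsqr in *. field. repeat split; nra.
Qed.

Lemma james_level_at_self : james_level c c = 1 / 2.
Proof. unfold james_level, james_level_denom. field. nra. Qed.

Lemma james_level_bounds (a : R) : 0 < a < 1 -> 0 < james_level c a < 1.
Proof.
  intro Ha. pose proof (james_level_denom_pos a Ha).
  unfold james_level. split.
  - apply Rdiv_lt_0_compat; nra.
  - apply (Rmult_lt_reg_r (james_level_denom c a)); [assumption |].
    unfold Rdiv. rewrite Rmult_assoc, Rinv_l, Rmult_1_r by lra.
    unfold james_level_denom. nra.
Qed.

Lemma james_eq_iff (a b : R) : 0 < a < 1 -> 0 < b < 1 ->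
  james a b = c <-> b = james_level c a.
Proof.
  intros Ha Hb. pose proof (james_level_denom_pos a Ha).
  assert (0 < a * (1 - b) + b * (1 - a)) by nra.
  unfold james, james_level in *. unfold james_level_denom in *. split.
  - intro Hj. apply (Rmult_eq_reg_r ((1 - c) * a + c * (1 - a))); [| lra].
    field_simplify; [| lra].
    assert (a * (1 - b) = c * (a * (1 - b) + b * (1 - a))).
    { rewrite <- Hj. field. lra. }
    nra.
  - intros ->. field_simplify; try nra. field. nra.
Qed.

(* D vanishes exactly where b = james_level c a; it is linear in b, which
   turns the Riccati equation for b into a linear equation for D. *)
Definition james_first_integral (g : R -> R) (a : R) : R :=
  g a * james_level_denom c a - (1 - c) * a.

Lemma james_first_integral_ode (g : R -> R) (a : R) : 0 < a < 1 ->
  solves_james_ode g ->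
  derivable_pt_lim (james_first_integral g) a
    ((1 - a - g a) / (a * (1 - a)) * james_first_integral g a).
Proof.
  intros Ha Hg.
  pose proof (derivable_pt_lim_minus _ _ a _ _
    (derivable_pt_lim_mult g (james_level_denom c) a _ _
       (Hg a Ha) (derivable_pt_lim_james_level_denom a))
    (derivable_pt_lim_affine (1 - c) 0 a)) as H.
  apply (derivable_pt_lim_ext _ (james_first_integral g)) in H.
  - replace ((1 - a - g a) / (a * (1 - a)) * james_first_integral g a)
      with (g a * (1 - g a) / (a * (1 - a)) * james_level_denom c a
            + g a * (1 - 2 * c) - (1 - c)).
    + exact H.
    + unfold james_first_integral, james_level_denom. field. nra.
  - intro y. unfold james_first_integral, minus_fct, mult_fct. ring.
Qed.

Lemma james_ode_unique (g : R -> R) : solves_james_ode g -> g c = 1 / 2 ->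
  forall a, 0 < a < 1 -> g a = james_level c a.
Proof.
  intros Hg Hgc a Ha.
  assert (Hvanish : james_first_integral g a = 0).
  { apply (linear_ode_vanish (james_first_integral g)
      (fun y => (1 - y - g y) / (y * (1 - y))) 0 1 c) with (3 := hc) (5 := Ha).
    - intros x Hx. exact (james_first_integral_ode g x Hx Hg).
    - intros x Hx. apply continuity_pt_james_coefficient; [| exact Hx].
      exact (derivable_continuous_pt g x (exist _ _ (Hg x Hx))).
    - unfold james_first_integral, james_level_denom. rewrite Hgc. field. }
  pose proof (james_level_denom_pos a Ha).
  unfold james_first_integral in Hvanish. unfold james_level.
  apply (Rmult_eq_reg_r (james_level_denom c a)); [| lra].
  field_simplify; lra.
Qed.

End JamesLevel.

Theorem proposition3p3 (c : R) (hc : 0 < c < 1) :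
  exists f : R -> R,
    solves_james_ode f /\ f c = 1 / 2 /\
    (forall g : R -> R, solves_james_ode g -> g c = 1 / 2 ->
       forall a, 0 < a < 1 -> g a = f a) /\
    (forall a b : R,
       (0 < a < 1 /\ 0 < b < 1 /\ james a b = c) <-> (0 < a < 1 /\ b = f a)).
Proof.
  exists (james_level c).
  split; [| split; [| split]].
  - exact (james_level_solves c hc).
  - exact (james_level_at_self c hc).
  - exact (james_ode_unique c hc).
  - intros a b. split.
    + intros [Ha [Hb Hj]]. split; [assumption |].
      apply (james_eq_iff c hc a b Ha Hb). exact Hj.
    + intros [Ha ->]. pose proof (james_level_bounds c hc a Ha).
      split; [assumption | split; [assumption |]].
      apply (james_eq_iff c hc); [assumption .. | reflexivity].
Qed.
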